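(* Every $K$-analytic Rothberger space is projectively countable.
   Context: All spaces are completely regular. A space is $K$-analytic if it is a continuous image of a Lindelöf Čech-complete space. $X$ is Rothberger if for every sequence $(\mathcal{U}_n)_{n<\omega}$ of open covers there are $U_n\in\mathcal{U}_n$ such that $\{U_n:n<\omega\}$ covers $X$. $X$ is projectively countable if every continuous image of $X$ in a separable metrizable space is countable. *)

From HB Require Import structures.
From mathcomp Require Import all_boot all_order all_algebra.
From mathcomp Require Import all_classical all_reals all_analysis.
From mathcomp Require Import Rstruct Rstruct_topology.

Set Implicit Arguments.
Unset Strict Implicit.
Unset Printing Implicit Defensive.
Import Order.TTheory GRing.Theory Num.Theory.

Local Open Scope classical_set_scope.
Local Open Scope ring_scope.

Notation Real := Rdefinitions.R.

Definition completely_regular (X : topologicalType) : Prop :=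
  hausdorff_space X /\
  forall (B : set X) (a : X), closed B -> ~ B a ->
    exists f : X -> Real, continuous f /\ f a = 0 /\ (forall b, B b -> f b = 1).

Definition open_cover (X : topologicalType) (C : set (set X)) : Prop :=
  (forall U, C U -> open U) /\ \bigcup_(U in C) U = [set: X].

Definition lindelof (X : topologicalType) : Prop :=
  forall C : set (set X), open_cover C ->
    exists D : set (set X), [/\ D `<=` C, countable D & \bigcup_(U in D) U = [set: X]].

Definition embedding (Y K : topologicalType) (e : Y -> K) : Prop :=
  [/\ injective e, continuous e &
     forall U : set Y, open U -> exists V : set K, open V /\ e @` U = range e `&` V].

(* Čech-complete: a completely regular space which is a G_delta in some
   Hausdorff compactification. *)
Definition cech_complete (Y : topologicalType) : Prop :=
  completely_regular Y /\
  exists (K : topologicalType) (e : Y -> K),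
    [/\ compact [set: K], hausdorff_space K, embedding e,
        closure (range e) = [set: K] &
        exists2 F : nat -> set K, (forall n, open (F n)) & range e = \bigcap_n F n].

Definition K_analytic (X : topologicalType) : Prop :=
  exists (Y : topologicalType) (f : Y -> X),
    [/\ lindelof Y, cech_complete Y, continuous f & range f = [set: X]].

Definition rothberger (X : topologicalType) : Prop :=
  forall Us : nat -> set (set X), (forall n, open_cover (Us n)) ->
    exists u : nat -> set X, (forall n, Us n (u n)) /\ \bigcup_n u n = [set: X].

Definition metrizable (M : topologicalType) : Prop :=
  exists d : M -> M -> Real,
    [/\ (forall x y, 0 <= d x y),
        (forall x y, d x y = 0 <-> x = y),
        (forall x y, d x y = d y x),
        (forall x y z, d x z <= d x y + d y z) &
        (forall A : set M, open A <->
           (forall x, A x -> exists2 eps : Real, 0 < eps &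
              [set y | d x y < eps] `<=` A))].

Definition separable (M : topologicalType) : Prop :=
  exists D : set M, countable D /\ closure D = [set: M].

Definition projectively_countable (X : topologicalType) : Prop :=
  forall (M : topologicalType) (f : X -> M),
    metrizable M -> separable M -> continuous f -> countable (range f).

(* Suppose f : X -> M has uncountable range, M separable metric, and let h : Y -> X be a
   continuous surjection from a Lindelöf space Y embedded by e in a compact Hausdorff K as
   the intersection of open sets F_n; put g := f \o h.  Splitting around two condensation
   points of g(e^-1 A) and shrinking with the Lindelöf property gives a binary tree of closed
   sets A_s in K with A_s inside F_m for m < |s|, uncountable images, and disjoint closures
   D_s of the images of siblings.  By compactness each branch has a common point, lying in
   the intersection of the F_n, i.e. in e(Y): some point of g(Y) lies in all D_s along any
   given branch.  On the other hand, at level n there are finitely many disjoint closed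
   pairs of D's, so M is covered by open sets each missing one set of every pair; the
   Rothberger property of X applied to the preimages of these covers yields one open set
   per level covering X, and a branch steered away from them has D's missing f(X). *)

From HB Require Import structures.
From mathcomp Require Import all_boot all_order all_algebra.
From mathcomp Require Import all_classical all_reals all_analysis.
From mathcomp Require Import Rstruct Rstruct_topology.
From mathcomp Require Import lra.

Set Implicit Arguments.
Unset Strict Implicit.
Unset Printing Implicit Defensive.
Import Order.TTheory GRing.Theory Num.Theory.

Local Open Scope classical_set_scope.
Local Open Scope ring_scope.

Lemma subset_countable (T : Type) (A B : set T) :
  A `<=` B -> countable B -> countable A.
Proof. by move=> AB; apply: sub_countable; apply: subset_card_le. Qed.

Lemma countable_setU (T : Type) (A B : set T) :
  countable A -> countable B -> countable (A `|` B).
Proof.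
move=> cA cB; have -> : A `|` B = \bigcup_(b in [set: bool]) (if b then A else B).
  by apply/seteqP; split=> [x [] ?|x [] [] _ ?]; [exists true|exists false|left|right].
by apply: bigcup_countable => [|[]].
Qed.

Lemma uncountable_two_points (T : Type) (A : set T) :
  ~ countable A -> exists p q, [/\ p <> q, A p & A q].
Proof.
move=> uncA; have [p Ap] : A !=set0.
  by apply/set0P/negP => /eqP A0; apply: uncA; rewrite A0; exact: countable0.
exists p; apply: contrapT => noq; apply: uncA.
apply: (@subset_countable _ _ [set p]); last exact: countable1.
by move=> q Aq; apply: contrapT => qp; apply: noq; exists q; split => // pq; apply: qp.
Qed.

Lemma lindelof_uncountable_piece (Y : topologicalType) (T : Type) (g : Y -> T)
    (P : set (set Y)) (A : set Y) :
  lindelof Y -> closed A -> (forall U, P U -> open U) ->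
  (forall y, A y -> exists2 U, P U & U y) ->
  ~ countable (g @` A) -> exists2 U, P U & ~ countable (g @` (U `&` A)).
Proof.
move=> Ylin clA openP coverA uncA.
pose C U := P U \/ U = ~` A.
have [|D [DC cD coverD]] := Ylin C.
  split=> [U [/openP //|->]|]; first by rewrite openC.
  apply/seteqP; split=> // y _; have [Ay|nAy] := pselect (A y).
    by have [U PU Uy] := coverA y Ay; exists U => //; left.
  by exists (~` A) => //; right.
apply: contrapT => noU; apply: uncA.
apply: (@subset_countable _ _ (\bigcup_(U in D) g @` (U `&` A))).
  move=> _ [y Ay <-]; have : (\bigcup_(U in D) U) y by rewrite coverD.
  by case=> U DU Uy; exists U => //; exists y.
apply: bigcup_countable => // U /DC [PU|->].
  by apply: contrapT => uncU; apply: noU; exists U.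
by rewrite setICl image_set0; exact: countable0.
Qed.

Lemma embedding_open_preimage (Y K : topologicalType) (e : Y -> K) (U : set Y) :
  embedding e -> open U -> exists2 V, open V & e @^-1` V = U.
Proof.
move=> [e_inj _ e_open] /e_open [V [oV eU]]; exists V => //.
apply/seteqP; split=> [y Vey|y Uy].
  have : (e @` U) (e y) by rewrite eU; split=> //; exists y.
  by case=> u Uu /e_inj <-.
by have [] : (range e `&` V) (e y) by rewrite -eU; exists y.
Qed.

Lemma compact_regular_shrink (K : topologicalType) (x : K) (O : set K) :
  compact [set: K] -> hausdorff_space K -> nbhs x O ->
  exists2 W, open W /\ W x & closure W `<=` O.
Proof.
move=> Kc Kh Ox.
have [C Cx clCO] := compact_regular Kh Kc (filterT : nbhs x setT) Ox.
exists (interior C); first by split; [exact: open_interior|].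
by move=> z /(closureS (@interior_subset _ C)) /clCO.
Qed.

Lemma compact_nested_closed (K : topologicalType) (A : nat -> set K) :
  compact [set: K] -> (forall n, closed (A n)) ->
  (forall n, A n.+1 `<=` A n) -> (forall n, A n !=set0) ->
  exists k, forall n, A n k.
Proof.
move=> Kc clA decrA neA.
have antiA m n : (m <= n)%N -> A n `<=` A m.
  elim: n => [|n IH]; first by rewrite leqn0 => /eqP ->.
  by rewrite leq_eqVlt => /orP [/eqP -> //|/IH AnAm x /decrA /AnAm].
pose F := filter_from [set: nat] A.
have F_proper : ProperFilter F.
  apply: filter_from_proper => [|n _]; last exact: neA.
  apply: filter_from_filter => [|m n _ _]; first by exists 0%N.
  exists (maxn m n) => // x Ax.
  by split; apply: (antiA _ (maxn m n)) Ax; rewrite ?leq_maxl ?leq_maxr.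
have [k [_ clusterk]] := Kc F F_proper filterT.
by exists k => n; apply: (clA n) => B Bk; apply: clusterk => //; exists n.
Qed.

Lemma open_nbhs_separating (T : topologicalType) (I : eqType) (C : I -> bool -> set T)
    (z : T) (s : seq I) :
  (forall i b, closed (C i b)) -> (forall i, C i false `&` C i true = set0) ->
  exists2 U, open U /\ U z & {in s, forall i, exists b, U `&` C i b = set0}.
Proof.
move=> clC disjC; elim: s => [|i s [U [oU Uz] sepU]].
  by exists setT => //; split => //; exact: openT.
have [b nCz] : exists b, ~ C i b z.
  have [C0z|] := pselect (C i false z); last by exists false.
  by exists true => C1z; have : (C i false `&` C i true) z by []; rewrite disjC.
exists (U `&` ~` C i b); first by split; [apply: openI; rewrite ?openC|].
move=> j; rewrite inE => /orP [/eqP ->|/sepU [c UC]].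
  by exists b; rewrite -setIA setICl setI0.
by exists c; apply: subsetI_eq0 UC => // x [].
Qed.

Definition metric_for (M : topologicalType) (d : M -> M -> Real) : Prop :=
  [/\ (forall x y, 0 <= d x y),
      (forall x y, d x y = 0 <-> x = y),
      (forall x y, d x y = d y x),
      (forall x y z, d x z <= d x y + d y z) &
      (forall A : set M, open A <->
         (forall x, A x -> exists2 eps : Real, 0 < eps &
            [set y | d x y < eps] `<=` A))].

Section Metric.
Variables (M : topologicalType) (d : M -> M -> Real).
Hypothesis dM : metric_for d.

Let d_eq0 x y : d x y = 0 <-> x = y. Proof. by case: dM. Qed.
Let dC x y : d x y = d y x. Proof. by case: dM. Qed.
Let d_triangle x y z : d x z <= d x y + d y z. Proof. by case: dM. Qed.
Let d_open (A : set M) : open A <->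
  (forall x, A x -> exists2 eps : Real, 0 < eps & [set y | d x y < eps] `<=` A).
Proof. by case: dM. Qed.

Definition dball (c : M) (r : Real) := [set y | d c y < r].
Definition dcball (c : M) (r : Real) := [set y | d c y <= r].

Lemma dist_gt0 p q : p <> q -> 0 < d p q.
Proof.
case: dM => d_ge0 _ _ _ _ pq.
by rewrite lt_neqAle d_ge0 andbT; apply/eqP => /esym /d_eq0.
Qed.

Lemma dball_open c r : open (dball c r).
Proof.
rewrite /dball; apply/d_open => x /= cx; exists (r - d c x); first by rewrite subr_gt0.
by move=> y /= xy; have := d_triangle c x y; lra.
Qed.

Lemma dball_nbhs c r : 0 < r -> nbhs c (dball c r).
Proof.
move=> r_gt0; apply: open_nbhs_nbhs; split; first exact: dball_open.
by rewrite /dball /= (d_eq0 c c).2.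
Qed.

Lemma dcball_closed c r : closed (dcball c r).
Proof.
rewrite /dcball -openC; apply/d_open => x /= /negP; rewrite -ltNge => rx.
exists (d c x - r) => [|y /= xy cy]; first by rewrite subr_gt0.
by have := d_triangle c y x; rewrite (dC y x); lra.
Qed.

Lemma dcball_disjoint p q r : 2 * r < d p q -> dcball p r `&` dcball q r = set0.
Proof.
move=> pq; apply/seteqP; split=> // z; rewrite /dcball /= => -[pz qz].
by have := d_triangle p z q; rewrite (dC z q); lra.
Qed.

Section Separable.
Hypothesis M_sep : separable M.

Definition condensation (S : set M) (z : M) :=
  forall r, 0 < r -> ~ countable (S `&` dball z r).

Lemma countable_not_condensation (S : set M) : countable (S `\` condensation S).
Proof.
have [D [cD denseD]] := M_sep.
pose P := [set ck : M * nat | D ck.1 /\ countable (S `&` dball ck.1 ck.2.+1%:R^-1)].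
apply: (@subset_countable _ _ (\bigcup_(ck in P) (S `&` dball ck.1 ck.2.+1%:R^-1))).
  move=> z [Sz /existsNP [r /not_implyP [r_gt0 /contrapT cntr]]].
  have r2_gt0 : 0 < r / 2 by rewrite divr_gt0.
  have [k _ /(_ k) /(_ (leqnn _)) /= k_lt] := near_infty_natSinv_lt (PosNum r2_gt0).
  set δ : Real := k.+1%:R^-1 in k_lt.
  have δ_gt0 : 0 < δ by rewrite invr_gt0 ltr0n.
  have [c Dc zc] : exists2 c, D c & d z c < δ.
    have : closure D z by rewrite denseD.
    by move=> /(_ _ (dball_nbhs z δ_gt0)) [c [Dc zc]]; exists c.
  have ball_sub : dball c δ `<=` dball z r.
    by rewrite /dball => w /= cw; have := d_triangle z c w; lra.
  exists (c, k); last by split => //; rewrite /dball /= dC.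
  by split=> //=; apply: subset_countable cntr => w [Sw /ball_sub].
apply: bigcup_countable => [|ck [] //].
apply: (@subset_countable _ _ (D `*` setT)); first by move=> ck [].
exact: countableX cD (countableP _).
Qed.

Lemma condensation_two_points (S : set M) :
  ~ countable S -> exists p q, [/\ p <> q, condensation S p & condensation S q].
Proof.
move=> uncS; have [|p [q [pq [_ ?] [_ ?]]]] := @uncountable_two_points _ (S `&` condensation S).
  move=> cSc; apply: uncS; have := countable_setU cSc (countable_not_condensation S).
  apply: subset_countable => z Sz.
  by have [?|?] := pselect (condensation S z); [left|right].
by exists p, q.
Qed.

End Separable.
End Metric.

Definition closed_disjoint_scheme (M : topologicalType) (D : seq bool -> set M) :=
  (forall s, closed (D s)) /\ (forall s, D (false :: s) `&` D (true :: s) = set0).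

(* Words grow at the head: [b :: s] is the child [b] of the node [s]. *)
Fixpoint split_tree (T : Type) (split : nat -> T -> T * T) (root : T) (s : seq bool) : T :=
  if s is b :: s' then
    let children := split (size s') (split_tree split root s') in
    if b then children.2 else children.1
  else root.

Fixpoint branch (pick : nat -> seq bool -> bool) (n : nat) : seq bool :=
  if n is m.+1 then pick m (branch pick m) :: branch pick m else [::].

Lemma size_branch pick n : size (branch pick n) = n.
Proof. by elim: n => //= n ->. Qed.

Section Scheme.
Variables (Y K M : topologicalType) (e : Y -> K) (Fs : nat -> set K).
Variables (d : M -> M -> Real) (g : Y -> M).
Hypotheses (Ylin : lindelof Y) (Kc : compact [set: K]) (Kh : hausdorff_space K).
Hypotheses (e_emb : embedding e) (Fs_open : forall n, open (Fs n)).
Hypothesis range_e : range e = \bigcap_n Fs n.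
Hypotheses (dM : metric_for d) (M_sep : separable M) (g_cont : continuous g).

Definition shadow (A : set K) : set M := g @` (e @^-1` A).

Lemma shrink_shadow (A : set K) n c r : 0 < r -> closed A ->
  condensation d (shadow A) c -> exists A',
  [/\ closed A', A' `<=` A `&` Fs n, ~ countable (shadow A') & shadow A' `<=` dcball d c r].
Proof.
move=> r_gt0 clA c_cond.
have e_cont : continuous e by case: e_emb.
pose B := e @^-1` A `&` g @^-1` dcball d c (r / 2).
have clB : closed B.
  apply: closedI; first exact: (continuous_closedP e).1 e_cont _ clA.
  exact: (continuous_closedP g).1 g_cont _ (@dcball_closed _ _ dM c (r / 2)).
have uncB : ~ countable (g @` B).
  move=> cB; apply: (c_cond (r / 2)); first by rewrite divr_gt0.
  by apply: subset_countable cB => _ [[y Ay <-] gy]; exists y => //; split=> //; exact: ltW.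
have [|V oV eV] := @embedding_open_preimage _ _ e (g @^-1` dball d c r) e_emb.
  by apply: open_comp => [y _|]; [exact: g_cont|exact: dball_open].
pose P U := exists2 W, open W /\ closure W `<=` V `&` Fs n & U = e @^-1` W.
have [||U [W [oW clW] ->] uncW] := lindelof_uncountable_piece (P := P) Ylin clB _ _ uncB.
- by move=> _ [W [oW _] ->]; apply: open_comp => // y _; exact: e_cont.
- move=> y [_ gy]; have Vey : (e @^-1` V) y.
    by rewrite eV /dball /=; rewrite /dcball /= in gy; lra.
  have Fey : Fs n (e y).
    have : range e (e y) by exists y.
    by rewrite range_e => /(_ n I).
  have VFey : nbhs (e y) (V `&` Fs n).
    by apply: open_nbhs_nbhs; split; [exact: openI|].
  have [W [oW Wey] clW] := compact_regular_shrink Kc Kh VFey.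
  by exists (e @^-1` W) => //; exists W.
exists (A `&` closure W); split.
- exact: closedI clA (@closed_closure _ W).
- by move=> x [Ax /clW [_ Fx]].
- apply: contra_not uncW; apply: subset_countable; apply: image_subset.
  by move=> y [Wey [Aey _]]; split=> //; exact: subset_closure.
- move=> _ [y [_ /clW [Vey _]] <-].
  by have : (e @^-1` V) y by []; rewrite eV /dball /dcball /= => /ltW.
Qed.

Definition admissible n (A : set K) :=
  [/\ closed A, ~ countable (shadow A) & forall m, (m < n)%N -> A `<=` Fs m].

Lemma admissible_setT : ~ countable (range g) -> admissible 0 setT.
Proof. by rewrite /admissible /shadow preimage_setT. Qed.

Lemma admissible_split n A : admissible n A -> exists A0 A1,
  [/\ admissible n.+1 A0, admissible n.+1 A1, A0 `<=` A, A1 `<=` A &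
      closure (shadow A0) `&` closure (shadow A1) = set0].
Proof.
move=> [clA uncA A_Fs].
have [p [q [pq p_cond q_cond]]] := condensation_two_points dM M_sep uncA.
pose r := d p q / 3.
have r_gt0 : 0 < r by rewrite divr_gt0 // (dist_gt0 dM pq).
have refine c : condensation d (shadow A) c -> exists2 A',
    admissible n.+1 A' /\ A' `<=` A & closure (shadow A') `<=` dcball d c r.
  move=> /(shrink_shadow n r_gt0 clA) [A' [clA' A'_sub uncA' A'_ball]].
  exists A'; last first.
    by move: (@dcball_closed _ _ dM c r) => /closure_id ->; exact: closureS.
  split; last by move=> x /A'_sub [].
  split=> // m; rewrite ltnS leq_eqVlt => /orP [/eqP -> x /A'_sub [] //|/A_Fs AF x].
  by move=> /A'_sub [/AF].
have [A0 [adm0 sub0] ball0] := refine p p_cond.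
have [A1 [adm1 sub1] ball1] := refine q q_cond.
exists A0, A1; split=> //; apply: subsetI_eq0 ball0 ball1 _.
by apply: (dcball_disjoint dM); rewrite /r; have := dist_gt0 dM pq; lra.
Qed.

Lemma admissible_tree : ~ countable (range g) -> exists T : seq bool -> set K,
  [/\ forall s, admissible (size s) (T s), forall b s, T (b :: s) `<=` T s &
      forall s, closure (shadow (T (false :: s))) `&` closure (shadow (T (true :: s))) = set0].
Proof.
move=> uncg.
have /choice [split splitP] : forall nA : nat * set K, exists AB : set K * set K,
    admissible nA.1 nA.2 -> [/\ admissible nA.1.+1 AB.1, admissible nA.1.+1 AB.2,
      AB.1 `<=` nA.2, AB.2 `<=` nA.2 &
      closure (shadow AB.1) `&` closure (shadow AB.2) = set0].
  move=> [n A]; have [/admissible_split [A0 [A1 ?]]|nadm] := pselect (admissible n A).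
    by exists (A0, A1).
  by exists (set0, set0) => /nadm.
pose T := split_tree (fun n A => split (n, A)) setT.
have T_adm s : admissible (size s) (T s).
  elim: s => [|b s IH]; first exact: admissible_setT.
  by have [? ? _ _ _] := splitP (size s, T s) IH; case: b.
exists T; split=> // [b s|s]; have [_ _ ? ? disj] := splitP (size s, T s) (T_adm s).
  by case: b.
exact: disj.
Qed.

Lemma admissible_branch_point (T : seq bool -> set K) :
  (forall s, admissible (size s) (T s)) -> (forall b s, T (b :: s) `<=` T s) ->
  forall pick, exists y, forall n, T (branch pick n) (e y).
Proof.
move=> T_adm T_decr pick.
have T_branch n : admissible n (T (branch pick n)).
  by have := T_adm (branch pick n); rewrite size_branch.
have [k Tk] : exists k, forall n, T (branch pick n) k.
  apply: compact_nested_closed => // [n|n|n]; first by case: (T_branch n).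
    exact: T_decr.
  have [_ unc _] := T_branch n.
  have [_ [y Ty _]] : shadow (T (branch pick n)) !=set0.
    by apply/set0P/negP => /eqP sh0; apply: unc; rewrite sh0; exact: countable0.
  by exists (e y).
have [y _ eyk] : range e k.
  by rewrite range_e => m _; have [_ _ /(_ m (ltnSn m))] := T_branch m.+1; apply; exact: Tk.
by exists y => n; rewrite eyk.
Qed.

Lemma uncountable_image_scheme : ~ countable (range g) -> exists D : seq bool -> set M,
  closed_disjoint_scheme D /\ forall pick, exists y, forall n, D (branch pick n) (g y).
Proof.
move=> /admissible_tree [T [T_adm T_decr T_disj]].
exists (fun s => closure (shadow (T s))); split.
  by split=> [s|//]; exact: closed_closure.
move=> pick; have [y Ty] := admissible_branch_point T_adm T_decr pick.
by exists y => n; apply: subset_closure; exists y => //; exact: Ty.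
Qed.

End Scheme.

Lemma rothberger_avoiding_branch (X M : topologicalType) (f : X -> M) (D : seq bool -> set M) :
  rothberger X -> continuous f -> closed_disjoint_scheme D ->
  exists pick, forall x, exists n, ~ D (branch pick n) (f x).
Proof.
move=> rotX f_cont [clD disjD].
pose good n (U : set M) :=
  open U /\ forall s, size s = n -> exists b, U `&` D (b :: s) = set0.
pose Us n := [set f @^-1` U | U in good n].
have Us_cover n : open_cover (Us n).
  split=> [_ [U [oU _] <-]|]; first by apply: open_comp => // x _; exact: f_cont.
  apply/seteqP; split=> // x _.
  have [U [oU Ufx] sepU] := @open_nbhs_separating _ _ (fun s b => D (b :: s)) (f x)
    [seq val t | t : n.-tuple bool] (fun s b => clD (b :: s)) disjD.
  exists (f @^-1` U) => //; exists U => //; split=> // s sn; apply: sepU.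
  by apply/mapP; exists (Tuple (introT eqP sn)); rewrite ?mem_enum.
have [u [u_Us u_cover]] := rotX Us Us_cover.
have /choice [U U_spec] n : exists U, good n U /\ f @^-1` U = u n.
  by have [V ? ?] := u_Us n; exists V.
have /choice [pick' pickP] ns : exists b, size ns.2 = ns.1 -> U ns.1 `&` D (b :: ns.2) = set0.
  have [s_n|] := pselect (size ns.2 = ns.1); last by exists true.
  by have [b ?] := (U_spec ns.1).1.2 _ s_n; exists b.
pose pick n s := pick' (n, s); exists pick => x.
have : (\bigcup_n u n) x by rewrite u_cover.
case=> n _; rewrite -(U_spec n).2 => Ufx; exists n.+1 => /= Dfx.
have : (U n `&` D (pick n (branch pick n) :: branch pick n)) (f x) by [].
by rewrite (pickP (n, branch pick n)) ?size_branch.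
Qed.

Theorem theorem3p33 (X : topologicalType) :
  completely_regular X -> K_analytic X -> rothberger X -> projectively_countable X.
Proof.
move=> _ [Y [h [Ylin [_ [K [e [Kc Kh e_emb _ [Fs Fs_open range_e]]]]] h_cont h_onto]]].
move=> rotX M f [d dM] M_sep f_cont; apply: contrapT => uncf.
have g_cont : continuous (f \o h) by move=> y; exact: continuous_comp (h_cont y) (f_cont _).
have uncg : ~ countable (range (f \o h)) by rewrite -(image_comp h f) h_onto.
have [D [D_scheme D_hit]] :=
  uncountable_image_scheme Ylin Kc Kh e_emb Fs_open range_e dM M_sep g_cont uncg.
have [pick pick_avoids] := rothberger_avoiding_branch rotX f_cont D_scheme.
have [y Dy] := D_hit pick.
by have [n] := pick_avoids (h y); apply; exact: Dy.
Qed.
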